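(* Let $A\in\mathbb{R}^{n\times d}$ have rows $\boldsymbol{a}_i^\top$ with $\max_i\|\boldsymbol{a}_i\|_2^2\le R$, $\lambda>0$; let each $f_i:\mathbb{R}\to\mathbb{R}$ be convex and $\beta$-smooth, $\alpha$-strongly convex over some convex set and linear outside it, with $\alpha\ge\beta/2$; let $g$ be $\mu$-strongly convex and $L$-smooth. Let $(\boldsymbol{x}^{(t)},\boldsymbol{y}^{(t)})$ be the iterates of Algorithm 1 (described in the context) with dual step size $\delta>0$ and $k$ dual coordinates updated per iteration. Then for every $t\ge1$, $$\Delta_d^{(t)}-\Delta_d^{(t-1)}+\Delta_p^{(t)}-\Delta_p^{(t-1)}\le\mathcal{L}(\boldsymbol{x}^{(t+1)},\boldsymbol{y}^{(t)})-\mathcal{L}(\boldsymbol{x}^{(t)},\boldsymbol{y}^{(t)})-\frac{1}{2\delta}\|\boldsymbol{y}^{(t)}-\boldsymbol{y}^{(t-1)}\|^2+\frac{2\delta Rk}{n^2}\|\bar{\boldsymbol{x}}^{(t)}-\boldsymbol{x}^{(t)}\|^2.$$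
   Context: $\mathcal{L}(\boldsymbol{x},\boldsymbol{y})=g(\boldsymbol{x})+\frac1n\langle\boldsymbol{y},A\boldsymbol{x}\rangle-\frac1n\sum_if_i^*(y_i)$ ($f_i^*$ convex conjugate); $D(\boldsymbol{y})=\min_{\|\boldsymbol{x}\|_1\le\lambda}\mathcal{L}(\boldsymbol{x},\boldsymbol{y})$, $D^*=\max D$; $\bar{\boldsymbol{x}}^{(t)}=\arg\min_{\|\boldsymbol{x}\|_1\le\lambda}\mathcal{L}(\boldsymbol{x},\boldsymbol{y}^{(t)})$; $\Delta_p^{(t)}=\mathcal{L}(\boldsymbol{x}^{(t+1)},\boldsymbol{y}^{(t)})-\mathcal{L}(\bar{\boldsymbol{x}}^{(t)},\boldsymbol{y}^{(t)})$; $\Delta_d^{(t)}=D^*-D(\boldsymbol{y}^{(t)})$. Algorithm 1 (parameters: integer $s$, $\eta\in(0,1]$, $\delta>0$, integer $k$): $\boldsymbol{x}^{(0)}=0$, $\boldsymbol{y}^{(0)}=0$; for $t=1,2,\dots$: $\tilde{\boldsymbol{x}}\in\arg\min_{\|\boldsymbol{x}\|_1\le\lambda,\|\boldsymbol{x}\|_0\le s}\{\langle\frac1nA^\top\boldsymbol{y}^{(t-1)}+\nabla g(\boldsymbol{x}^{(t-1)}),\boldsymbol{x}\rangle+\frac L2\eta\|\boldsymbol{x}-\boldsymbol{x}^{(t-1)}\|^2\}$, $\boldsymbol{x}^{(t)}=(1-\eta)\boldsymbol{x}^{(t-1)}+\eta\tilde{\boldsymbol{x}}$; $\tilde{\boldsymbol{y}}=\arg\max_{\boldsymbol{y}'}\{\frac1n\langle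 A\boldsymbol{x}^{(t)},\boldsymbol{y}'\rangle-\frac1n\sum_if_i^*(y_i')-\frac1{2\delta}\|\boldsymbol{y}'-\boldsymbol{y}^{(t-1)}\|^2\}$; $I^{(t)}$ = the $k$ indices $i\in[n]$ with largest $|\tilde y_i-y_i^{(t-1)}|$; $y_i^{(t)}=\tilde y_i$ for $i\in I^{(t)}$, $y_i^{(t)}=y_i^{(t-1)}$ otherwise. *)

From HB Require Import structures.
From mathcomp Require Import all_boot all_order all_algebra.
From mathcomp Require Import all_classical all_reals all_analysis.
Set Implicit Arguments. Unset Strict Implicit. Unset Printing Implicit Defensive.
Import Order.TTheory GRing.Theory Num.Theory.
Local Open Scope classical_set_scope.
Local Open Scope ring_scope.

Section Defs.
Variable R : realType.

Definition dotv {m : nat} (u v : 'cV[R]_m) : R := \sum_(i < m) u i 0 * v i 0.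
Definition sqnorm {m : nat} (u : 'cV[R]_m) : R := dotv u u.
Definition norm2 {m : nat} (u : 'cV[R]_m) : R := Num.sqrt (sqnorm u).
Definition norm1 {m : nat} (u : 'cV[R]_m) : R := \sum_(i < m) `|u i 0|.
Definition norm0 {m : nat} (u : 'cV[R]_m) : nat := #|[set i | u i 0 != 0]|.

Definition convex_setR (C : set R) : Prop :=
  forall x y th, C x -> C y -> 0 <= th <= 1 -> C (th * x + (1 - th) * y).

Definition convexR (f : R -> R) : Prop :=
  forall x y th, 0 <= th <= 1 ->
    f (th * x + (1 - th) * y) <= th * f x + (1 - th) * f y.

Definition smoothR (beta : R) (f : R -> R) : Prop :=
  (forall x, derivable f x 1) /\
  (forall x y, `|derive1 f x - derive1 f y| <= beta * `|x - y|).

Definition strongly_convex_onR (alpha : R) (C : set R) (f : R -> R) : Prop :=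
  forall x y th, C x -> C y -> 0 <= th <= 1 ->
    f (th * x + (1 - th) * y)
      <= th * f x + (1 - th) * f y - alpha / 2 * th * (1 - th) * (x - y) ^+ 2.

Definition linear_outsideR (C : set R) (f : R -> R) : Prop :=
  forall x y th, (forall z, Num.min x y <= z <= Num.max x y -> ~ C z) ->
    0 <= th <= 1 -> f (th * x + (1 - th) * y) = th * f x + (1 - th) * f y.

Definition is_gradient {m : nat} (g : 'cV[R]_m -> R) (G : 'cV[R]_m -> 'cV[R]_m) : Prop :=
  forall x (eps : R), 0 < eps -> exists2 del : R, 0 < del & forall h : 'cV[R]_m,
    norm2 h < del -> `|g (x + h) - g x - dotv (G x) h| <= eps * norm2 h.

Definition strongly_convexV {m : nat} (mu : R) (g : 'cV[R]_m -> R) : Prop :=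
  forall x y th, 0 <= th <= 1 ->
    g (th *: x + (1 - th) *: y)
      <= th * g x + (1 - th) * g y - mu / 2 * th * (1 - th) * sqnorm (x - y).

Definition smoothV {m : nat} (L : R) (g : 'cV[R]_m -> R) (G : 'cV[R]_m -> 'cV[R]_m) : Prop :=
  is_gradient g G /\ forall x y, norm2 (G x - G y) <= L * norm2 (x - y).

Definition conj_fun (f : R -> R) (y : R) : \bar R :=
  ereal_sup [set ((y * x - f x)%:E) | x in [set: R]].

Definition Lag {n d : nat} (g : 'cV[R]_d -> R) (f : 'I_n -> R -> R)
    (A : 'M[R]_(n, d)) (x : 'cV[R]_d) (y : 'cV[R]_n) : \bar R :=
  ((g x + n%:R^-1 * dotv y (A *m x))%:E
    - (n%:R^-1)%:E * \sum_(i < n) conj_fun (f i) (y i ord0))%E.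

Definition Dual {n d : nat} (g : 'cV[R]_d -> R) (f : 'I_n -> R -> R)
    (A : 'M[R]_(n, d)) (lam : R) (y : 'cV[R]_n) : \bar R :=
  ereal_inf [set Lag g f A x y | x in [set x : 'cV[R]_d | norm1 x <= lam]].

Definition Dstar {n d : nat} (g : 'cV[R]_d -> R) (f : 'I_n -> R -> R)
    (A : 'M[R]_(n, d)) (lam : R) : \bar R :=
  ereal_sup (range (Dual g f A lam)).

Definition algorithm1 {n d : nat} (g : 'cV[R]_d -> R) (G : 'cV[R]_d -> 'cV[R]_d)
    (f : 'I_n -> R -> R) (A : 'M[R]_(n, d)) (lam L : R)
    (s : nat) (eta delta : R) (k : nat)
    (x : nat -> 'cV[R]_d) (y : nat -> 'cV[R]_n) : Prop :=
  x 0%N = 0 /\ y 0%N = 0 /\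
  forall t : nat, (1 <= t)%N ->
    (exists2 xt : 'cV[R]_d,
       (norm1 xt <= lam /\ (norm0 xt <= s)%N /\
        forall x' : 'cV[R]_d, norm1 x' <= lam -> (norm0 x' <= s)%N ->
          dotv (n%:R^-1 *: (A^T *m y t.-1) + G (x t.-1)) xt
            + L / 2 * eta * sqnorm (xt - x t.-1)
          <= dotv (n%:R^-1 *: (A^T *m y t.-1) + G (x t.-1)) x'
            + L / 2 * eta * sqnorm (x' - x t.-1))
     & x t = (1 - eta) *: x t.-1 + eta *: xt) /\
    (exists yt : 'cV[R]_n,
       (forall y' : 'cV[R]_n,
          ((n%:R^-1 * dotv (A *m x t) y' - (2 * delta)^-1 * sqnorm (y' - y t.-1))%:E
             - (n%:R^-1)%:E * \sum_(i < n) conj_fun (f i) (y' i ord0)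
          <= (n%:R^-1 * dotv (A *m x t) yt - (2 * delta)^-1 * sqnorm (yt - y t.-1))%:E
             - (n%:R^-1)%:E * \sum_(i < n) conj_fun (f i) (yt i ord0))%E) /\
       exists I : {set 'I_n},
         #|I| = k /\
         (forall i j, i \in I -> j \notin I ->
            `|yt j 0 - y t.-1 j 0| <= `|yt i 0 - y t.-1 i 0|) /\
         (forall i, y t i 0 = if i \in I then yt i 0 else y t.-1 i 0)).

End Defs.

From HB Require Import structures.
From mathcomp Require Import all_boot all_order all_algebra.
From mathcomp Require Import all_classical all_reals all_analysis.
From mathcomp Require Import lra ring.
Import Order.TTheory GRing.Theory Num.Theory.
Set Implicit Arguments.
Unset Strict Implicit.
Unset Printing Implicit Defensive.

Local Open Scope classical_set_scope.
Local Open Scope ring_scope.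

(* Since [D(y) = L(xbar, y)] and [xbar^(t-1)] minimises [L(., y^(t-1))], the claim
   reduces to bounding [2 (L(xbar, u) - L(xbar, v)) - (L(x, u) - L(x, v))], where
   [u = y^(t-1)], [v = y^(t)], [x = x^(t)] and [xbar = xbar^(t)].  There [g] cancels
   and the expression splits over the [k] updated dual coordinates.  On each of them
   the first-order optimality of the proximal dual step (move the coordinate towards
   [u_i] and use convexity of [f_i^*]) and Young's inequality give the bound
   [- (v_i - u_i)^2 / (2 delta) + 2 delta / n^2 <a_i, xbar - x>^2]; Cauchy-Schwarz
   with [|a_i|^2 <= R] concludes.  If some [f_i^*] is infinite at [u] or [v], the Lagrangian is [-oo]
   there and the inequality holds trivially in the extended reals. *)

Section RealFieldFacts.
Variable R : realFieldType.

Lemma le0_of_le_vanishing_mul (Z Y : R) :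
  0 <= Y -> (forall th : R, 0 < th <= 1 -> Z <= th * Y) -> Z <= 0.
Proof.
move=> Y0 hZ; rewrite leNgt; apply/negP => Z0.
have ZY0 : 0 < Z + Y by lra.
have : Z <= Z / (Z + Y) * Y.
  by apply: hZ; rewrite divr_gt0 //= ler_pdivrMr //; lra.
rewrite mulrAC ler_pdivlMr //; nra.
Qed.

(* Compare [q] with [(1 - th) q + th u], divide by [th] and let [th] tend to [0]. *)
Lemma max_on_segment_le (F : R -> R) (c b u q : R) :
  0 <= b ->
  (forall th : R, 0 <= th <= 1 ->
     F ((1 - th) * q + th * u) <= (1 - th) * F q + th * F u) ->
  (forall th : R, 0 <= th <= 1 ->
     c * ((1 - th) * q + th * u) - b * ((1 - th) * q + th * u - u) ^+ 2
       - F ((1 - th) * q + th * u)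
     <= c * q - b * (q - u) ^+ 2 - F q) ->
  F q - F u <= c * (q - u) - 2 * b * (q - u) ^+ 2.
Proof.
move=> b0 Fcvx qmax; rewrite -subr_le0.
apply: (le0_of_le_vanishing_mul (Y := b * (q - u) ^+ 2)) => [|th /andP[th0 th1]].
  by rewrite mulr_ge0 ?sqr_ge0.
have th01 : 0 <= th <= 1 by rewrite ltW.
have hcvx := Fcvx _ th01; have hmax := qmax _ th01.
have : th * (F q - F u - c * (q - u) + 2 * b * (q - u) ^+ 2 - th * (b * (q - u) ^+ 2)) <= 0
  by lra.
by rewrite pmulr_rle0 //; lra.
Qed.

Lemma sqr_sum_mul_le m (a b : 'I_m -> R) :
  (\sum_(i < m) a i * b i) ^+ 2 <= (\sum_(i < m) a i ^+ 2) * (\sum_(i < m) b i ^+ 2).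
Proof.
set A := \sum_i a i ^+ 2; set B := \sum_i b i ^+ 2; set C := \sum_i a i * b i.
have B0 : 0 <= B by rewrite sumr_ge0 // => i _; rewrite sqr_ge0.
have [B_eq0|Bneq0] := eqVneq B 0.
  have b0 i : b i = 0.
    apply/eqP; rewrite -sqrf_eq0; apply/eqP.
    by apply: (psumr_eq0P _ B_eq0) => // j _; rewrite sqr_ge0.
  by rewrite B_eq0 /C big1 ?expr0n ?mulr0 // => i _; rewrite b0 mulr0.
have : 0 <= \sum_i (B * a i - C * b i) ^+ 2 by rewrite sumr_ge0 // => i _; rewrite sqr_ge0.
have -> : \sum_i (B * a i - C * b i) ^+ 2 = B * (A * B - C ^+ 2).
  rewrite (eq_bigr (fun i => B ^+ 2 * a i ^+ 2 - 2 * B * C * (a i * b i) + C ^+ 2 * b i ^+ 2));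
    last by move=> i _; ring.
  by rewrite big_split sumrB /= -!mulr_sumr -/A -/B -/C; ring.
by rewrite pmulr_rge0 ?lt_def ?Bneq0 // subr_ge0.
Qed.

Lemma sum_col_set (V : zmodType) n (F : 'I_n -> R -> V) (q : 'cV[R]_n) i z :
  \sum_j F j ((\col_l (if l == i then z else q l 0)) j 0)
    = \sum_j F j (q j 0) + (F i z - F i (q i 0)).
Proof.
rewrite (bigD1 i) // [in RHS](bigD1 i) //= mxE eqxx.
rewrite (eq_bigr (fun j => F j (q j 0))) => [|j /negbTE ji]; last by rewrite mxE ji.
by rewrite addrAC subrKC.
Qed.

End RealFieldFacts.

Section Conjugate.
Variable R : realType.

(* [fine] sends [+oo] to [0]; [conjR f] is only used where [conj_fun f] is finite. *)
Definition conjR (f : R -> R) (z : R) : R := fine (conj_fun f z).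

Definition conj_finite n (f : 'I_n -> R -> R) (y : 'cV[R]_n) : Prop :=
  forall i, conj_fun (f i) (y i 0) \is a fin_num.

Lemma conj_fun_gtNy (f : R -> R) z : (-oo < conj_fun f z)%E.
Proof.
apply: (lt_le_trans _ (ereal_sup_ubound _)); last by exists 0.
exact: ltNyr.
Qed.

Lemma conj_fun_convex (f : R -> R) u v (th : R) :
  conj_fun f u \is a fin_num -> conj_fun f v \is a fin_num -> 0 <= th <= 1 ->
  (conj_fun f ((1 - th) * u + th * v) <= ((1 - th) * conjR f u + th * conjR f v)%:E)%E.
Proof.
move=> fu fv /andP[th0 th1]; apply: ge_ereal_sup => _ [z _ <-]; rewrite lee_fin.
have hu : u * z - f z <= conjR f u.
  by rewrite -lee_fin fineK //; apply: ereal_sup_ubound; exists z.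
have hv : v * z - f z <= conjR f v.
  by rewrite -lee_fin fineK //; apply: ereal_sup_ubound; exists z.
have th0' : 0 <= 1 - th by lra.
nra.
Qed.

Lemma conj_fun_convex_fin (f : R -> R) u v (th : R) :
  conj_fun f u \is a fin_num -> conj_fun f v \is a fin_num -> 0 <= th <= 1 ->
  conj_fun f ((1 - th) * u + th * v) \is a fin_num.
Proof.
move=> fu fv th01; have := conj_fun_convex fu fv th01.
rewrite fin_numE gt_eqF ?conj_fun_gtNy //=.
by case: (conj_fun _ _).
Qed.

Lemma sub_conj_sum_fin n (P N : R) (f : 'I_n -> R -> R) (y : 'cV[R]_n) :
  conj_finite f y ->
  (P%:E - N%:E * \sum_(i < n) conj_fun (f i) (y i ord0))%E
    = (P - N * \sum_(i < n) conjR (f i) (y i 0))%:E.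
Proof.
move=> fy; rewrite (eq_bigr (fun i => (conjR (f i) (y i 0))%:E)) => [|i _].
  by rewrite sumEFin -EFinM -EFinB.
by rewrite fineK // fy.
Qed.

Lemma sub_conj_sum_Ny n (P N : R) (f : 'I_n -> R -> R) (y : 'cV[R]_n) :
  0 < N -> ~ conj_finite f y ->
  (P%:E - N%:E * \sum_(i < n) conj_fun (f i) (y i ord0))%E = -oo%E.
Proof.
move=> N0 fy.
have [i fyi] : exists i, conj_fun (f i) (y i 0) = +oo%E.
  apply: contra_notP fy => nfy i.
  rewrite fin_numE gt_eqF ?conj_fun_gtNy //=.
  by apply/eqP => fyi; apply: nfy; exists i.
have -> : (\sum_(i < n) conj_fun (f i) (y i ord0))%E = +oo%E.
  apply/esum_eqyP; first by move=> j _; rewrite gt_eqF ?conj_fun_gtNy.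
  by exists i; rewrite mem_index_enum.
by rewrite mulry gtr0_sg // mul1e.
Qed.

End Conjugate.

Lemma sqnorm_ge0 (R : realType) m (w : 'cV[R]_m) : 0 <= sqnorm w.
Proof. by rewrite sumr_ge0 // => i _; rewrite -expr2 sqr_ge0. Qed.

Section Lagrangian.
Variables (R : realType) (n d : nat) (g : 'cV[R]_d -> R) (A : 'M[R]_(n, d)).

Definition LagR (F : 'I_n -> R -> R) (x : 'cV[R]_d) (y : 'cV[R]_n) : R :=
  g x + n%:R^-1 * dotv y (A *m x) - n%:R^-1 * \sum_(i < n) F i (y i 0).

Lemma Lag_fin (f : 'I_n -> R -> R) x y :
  conj_finite f y -> Lag g f A x y = (LagR (fun i => conjR (f i)) x y)%:E.
Proof. exact: sub_conj_sum_fin. Qed.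

Lemma Lag_Ny (f : 'I_n -> R -> R) x y :
  (0 < n)%N -> ~ conj_finite f y -> Lag g f A x y = -oo%E.
Proof. by move=> n0; apply: sub_conj_sum_Ny; rewrite invr_gt0 ltr0n. Qed.

Lemma Dual_argmin (f : 'I_n -> R -> R) (lam : R) xb y :
  norm1 xb <= lam ->
  (forall x', norm1 x' <= lam -> (Lag g f A xb y <= Lag g f A x' y)%E) ->
  Dual g f A lam y = Lag g f A xb y.
Proof.
move=> xb_lam xb_min; apply/le_anti/andP; split.
  by apply: ereal_inf_lbound; exists xb.
by apply/ereal_infP => _ [x' x'_lam <-]; exact: xb_min.
Qed.

Lemma LagR_subE F x u v :
  LagR F x u - LagR F x v
    = n%:R^-1 * \sum_i ((u i 0 - v i 0) * (A *m x) i 0 - (F i (u i 0) - F i (v i 0))).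
Proof.
rewrite /LagR /dotv sumrB; under [X in _ = _ * (X - _)]eq_bigr do rewrite mulrBl.
rewrite sumrB sumrB; ring.
Qed.

Lemma row_mul_sqr_le w i :
  ((A *m w) i 0) ^+ 2 <= (\sum_j A i j ^+ 2) * sqnorm w.
Proof.
rewrite mxE; apply: le_trans (sqr_sum_mul_le (fun j => A i j) (fun j => w j 0)) _.
apply: ler_wpM2l; first by rewrite sumr_ge0 // => j _; rewrite sqr_ge0.
by under eq_bigr do rewrite expr2.
Qed.

Lemma sum_row_mul_sqr_le (Rb : R) (I : {set 'I_n}) w :
  (forall i, \sum_j A i j ^+ 2 <= Rb) ->
  \sum_(i in I) ((A *m w) i 0) ^+ 2 <= #|I|%:R * Rb * sqnorm w.
Proof.
move=> hA; rewrite -mulrA -sum1_card natr_sum mulr_suml.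
apply: ler_sum => i _; rewrite mul1r.
apply: le_trans (row_mul_sqr_le w i) _; apply: ler_wpM2r (hA i).
exact: sqnorm_ge0.
Qed.

Lemma LagR_dual_step (F : 'I_n -> R -> R) (delta Rb : R) (k : nat)
    (x xb : 'cV[R]_d) (u v : 'cV[R]_n) (I : {set 'I_n}) :
  0 < delta -> #|I| = k -> (forall i, \sum_j A i j ^+ 2 <= Rb) ->
  (forall i, i \notin I -> v i 0 = u i 0) ->
  (forall i, i \in I ->
     n%:R^-1 * (F i (v i 0) - F i (u i 0))
       <= n%:R^-1 * (A *m x) i 0 * (v i 0 - u i 0) - 2 * (2 * delta)^-1 * (v i 0 - u i 0) ^+ 2) ->
  2 * (LagR F xb u - LagR F xb v) - (LagR F x u - LagR F x v)
    <= - ((2 * delta)^-1 * sqnorm (v - u))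
       + 2 * delta * Rb * k%:R / n%:R ^+ 2 * sqnorm (xb - x).
Proof.
move=> delta0 cardI hA v_out v_in; set N := n%:R^-1 : R.
have coord_le i :
  N * (2 * ((u i 0 - v i 0) * (A *m xb) i 0 - (F i (u i 0) - F i (v i 0)))
       - ((u i 0 - v i 0) * (A *m x) i 0 - (F i (u i 0) - F i (v i 0))))
  <= - ((2 * delta)^-1 * (v i 0 - u i 0) ^+ 2)
     + (if i \in I then 2 * delta * N ^+ 2 * ((A *m (xb - x)) i 0) ^+ 2 else 0).
  have -> : (A *m (xb - x)) i 0 = (A *m xb) i 0 - (A *m x) i 0 by rewrite mulmxBr !mxE.
  have [iI|iNI] := boolP (i \in I); last first.
    by rewrite v_out //; lra.
  have := v_in i iI; rewrite -/N.
  set p := v i 0 - u i 0; set r := (A *m xb) i 0 - (A *m x) i 0.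
  (* Young's inequality [- 2 N p r <= p^2 / (2 delta) + 2 delta N^2 r^2] *)
  have young : 0 <= (2 * delta)^-1 * p ^+ 2 + 2 * N * p * r + 2 * delta * N ^+ 2 * r ^+ 2.
    have -> : (2 * delta)^-1 * p ^+ 2 + 2 * N * p * r + 2 * delta * N ^+ 2 * r ^+ 2
      = (p + 2 * delta * N * r) ^+ 2 / (2 * delta) by field; rewrite gt_eqF //; lra.
    by rewrite divr_ge0 ?sqr_ge0 //; lra.
  rewrite /p /r in young *; lra.
rewrite !LagR_subE -/N mulrCA -mulrBr mulr_sumr -sumrB mulr_sumr.
apply: le_trans (ler_sum _ (fun i _ => coord_le i)) _.
have -> : sqnorm (v - u) = \sum_i (v i 0 - u i 0) ^+ 2.
  by apply: eq_bigr => i _; rewrite !mxE expr2.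
rewrite big_split /= sumrN -big_mkcond /= -!mulr_sumr lerD2l.
have -> : 2 * delta * Rb * k%:R / n%:R ^+ 2 = 2 * delta * N ^+ 2 * (k%:R * Rb).
  by rewrite exprVn; ring.
have N0 : 0 <= N by rewrite invr_ge0 ler0n.
rewrite -!mulrA !ler_wpM2l ?N0 ?(ltW delta0) //.
by rewrite mulrA -cardI; exact: sum_row_mul_sqr_le.
Qed.

End Lagrangian.

Section ProximalStep.
Variables (R : realType) (n : nat) (f : 'I_n -> R -> R) (c u q : 'cV[R]_n) (N b : R).
Hypothesis N_gt0 : 0 < N.
(* The dual step of Algorithm 1, with [N = 1/n] and [b = 1/(2 delta)]. *)
Hypothesis q_max : forall y' : 'cV[R]_n,
  ((N * dotv c y' - b * sqnorm (y' - u))%:E - N%:E * \sum_(i < n) conj_fun (f i) (y' i ord0)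
   <= (N * dotv c q - b * sqnorm (q - u))%:E - N%:E * \sum_(i < n) conj_fun (f i) (q i ord0))%E.

Lemma prox_conj_finite : conj_finite f u -> conj_finite f q.
Proof.
move=> fu; apply: contrapT => nfq; have := q_max u.
by rewrite sub_conj_sum_fin // sub_conj_sum_Ny // leeNy_eq.
Qed.

Lemma prox_obj_separable (F : 'I_n -> R -> R) y :
  N * dotv c y - b * sqnorm (y - u) - N * \sum_i F i (y i 0)
    = \sum_i (N * c i 0 * y i 0 - b * (y i 0 - u i 0) ^+ 2 - N * F i (y i 0)).
Proof.
rewrite /sqnorm /dotv !mulr_sumr -!sumrB; apply: eq_bigr => i _.
by rewrite !mxE; ring.
Qed.

Lemma prox_coord_le i :
  0 <= b -> conj_finite f u ->
  N * (conjR (f i) (q i 0) - conjR (f i) (u i 0))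
    <= N * c i 0 * (q i 0 - u i 0) - 2 * b * (q i 0 - u i 0) ^+ 2.
Proof.
move=> b0 fu; have fq := prox_conj_finite fu.
rewrite mulrBr; apply: (max_on_segment_le (F := fun z => N * conjR (f i) z)) => // th th01 /=.
  have := conj_fun_convex (fq i) (fu i) th01.
  rewrite -[conj_fun _ _]fineK ?(conj_fun_convex_fin (fq i) (fu i) th01) // lee_fin => hconv.
  have := ler_wpM2l (ltW N_gt0) hconv; rewrite /conjR; lra.
set z := (1 - th) * q i 0 + th * u i 0.
pose y' := \col_j (if j == i then z else q j 0).
have fy' : conj_finite f y'.
  move=> j; rewrite mxE; case: eqP => [->|_]; last exact: fq.
  exact: conj_fun_convex_fin.
have := q_max y'; rewrite !sub_conj_sum_fin // lee_fin !(prox_obj_separable (fun j => conjR (f j))).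
rewrite (sum_col_set (fun j w => N * c j 0 * w - b * (w - u j 0) ^+ 2 - N * conjR (f j) w)).
lra.
Qed.

End ProximalStep.

Theorem lemma2 (R : realType) (n d : nat) (A : 'M[R]_(n, d)) (Rb lam : R)
  (f : 'I_n -> R -> R) (alpha beta : R)
  (g : 'cV[R]_d -> R) (G : 'cV[R]_d -> 'cV[R]_d) (mu L : R)
  (s : nat) (eta delta : R) (k : nat)
  (x : nat -> 'cV[R]_d) (y : nat -> 'cV[R]_n) (xbar : nat -> 'cV[R]_d) :
  (0 < n)%N ->
  (forall i : 'I_n, \sum_(j < d) A i j ^+ 2 <= Rb) ->
  0 < lam ->
  0 < alpha -> 0 <= beta -> beta / 2 <= alpha ->
  (forall i, convexR (f i) /\ smoothR beta (f i) /\
     exists C : set R, convex_setR C /\ strongly_convex_onR alpha C (f i)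
                       /\ linear_outsideR C (f i)) ->
  0 < mu -> 0 < L -> strongly_convexV mu g -> smoothV L g G ->
  0 < eta <= 1 -> 0 < delta ->
  algorithm1 g G f A lam L s eta delta k x y ->
  (forall t, norm1 (xbar t) <= lam /\
     forall x' : 'cV[R]_d, norm1 x' <= lam ->
       (Lag g f A (xbar t) (y t) <= Lag g f A x' (y t))%E) ->
  forall t : nat, (1 <= t)%N ->
  let Dp := fun t => (Lag g f A (x t.+1) (y t) - Lag g f A (xbar t) (y t))%E in
  let Dd := fun t => (Dstar g f A lam - Dual g f A lam (y t))%E in
  (Dd t - Dd t.-1 + Dp t - Dp t.-1
   <= Lag g f A (x t.+1) (y t) - Lag g f A (x t) (y t)
      - ((2 * delta)^-1 * sqnorm (y t - y t.-1))%:E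
      + ((2 * delta * Rb * k%:R / (n%:R ^+ 2)) * sqnorm (xbar t - x t))%:E)%E.
Proof.
move=> n_gt0 hA _ _ _ _ _ _ _ _ _ _ delta_gt0 [_ [_ alg]] xbar_min t t_ge1.
cbv zeta beta; rewrite (prednK t_ge1).
have Dual_xbar j : Dual g f A lam (y j) = Lag g f A (xbar j) (y j).
  exact: Dual_argmin (xbar_min j).1 (xbar_min j).2.
have u_min := (xbar_min t.-1).2 _ (xbar_min t).1.
have [_ [q [q_max [I [cardI [_ y_upd]]]]]] := alg t t_ge1.
rewrite !Dual_xbar; set u := y t.-1 in q_max y_upd u_min *; set v := y t in y_upd *.
have [fv|nfv] := pselect (conj_finite f v); last first.
  by rewrite !(Lag_Ny g A _ n_gt0 nfv) addNye addeNy addNye leNye.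
have [fu|nfu] := pselect (conj_finite f u); last first.
  rewrite !(Lag_Ny g A _ n_gt0 nfu) !(Lag_fin g A _ fv).
  by case: (Dstar _ _ _ _) => [r||] /=; rewrite ?addeNy ?addNye ?leNye.
have N_gt0 : 0 < n%:R^-1 :> R by rewrite invr_gt0 ltr0n.
have v_out i : i \notin I -> v i 0 = u i 0 by rewrite y_upd => /negbTE ->.
have v_in i : i \in I ->
    n%:R^-1 * (conjR (f i) (v i 0) - conjR (f i) (u i 0))
      <= n%:R^-1 * (A *m x t) i 0 * (v i 0 - u i 0)
         - 2 * (2 * delta)^-1 * (v i 0 - u i 0) ^+ 2.
  rewrite y_upd => ->; apply: prox_coord_le N_gt0 q_max i _ fu.
  by rewrite invr_ge0 mulr_ge0 // ltW.
have := LagR_dual_step (F := fun i => conjR (f i)) g (xbar t) delta_gt0 cardI hA v_out v_in.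
rewrite !Lag_fin // lee_fin in u_min; rewrite !Lag_fin //.
case: (Dstar _ _ _ _) => [r step||] /=; first by rewrite -!EFinD lee_fin; lra.
all: by rewrite ?addeNy ?addNye ?leNye.
Qed.
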